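(* Let $Y$ be a solid vector space and $(X,d)$ a cone metric space over $Y$. Suppose $(x_n)$ is a sequence in $X$ with $d(x_n,x)\preceq b_n+\alpha\, d(y_n,y)+\beta\, d(z_n,z)$ for all $n$, where $x\in X$, $(b_n)$ is a sequence in $Y$ with $b_n\to0$, $(y_n)$ and $(z_n)$ are sequences in $X$ converging to $y$ and $z$ respectively, and $\alpha,\beta\ge0$ are real numbers. Then $x_n\to x$ in $X$.
   Context: Vector space with convergence: a real vector space $Y$ with a relation $\to$ between sequences in $Y$ and points of $Y$ (uniqueness of limits not assumed) such that (C1) $x_n\to x$, $y_n\to y$ imply $x_n+y_n\to x+y$; (C2) $x_n\to x$, $\lambda\in\mathbb R$ imply $\lambda x_n\to\lambda x$; (C3) $\lambda_n\to\lambda$ in $\mathbb R$ imply $\lambda_n x\to\lambda x$. $A\subseteq Y$ is open if $x_n\to x\in A$ implies $x_n\in A$ for all but finitely many $n$; closed if $x_n\to x$, $x_n\in A$ $\forall n$ imply $x\in A$; $A^\circ$ is the union of all open subsets of $A$. A cone is a nonempty closed $K$ with $\lambda K\subseteq K$ ($\lambda\ge0$), $K+K\subseteq K$, $K\cap(-K)=\{0\}$; solid if $K\ne\{0\}$, $K^\circ\ne\emptyset$. A vector ordering is a partial order $\preceq$ with (V1) $x\preceq y\Rightarrow x+z\preceq y+z$; (V2) $\lambda\ge0$, $x\preceq y\Rightarrow\lambda x\preceq\lambda y$; (V3) $x_n\to x$, $y_n\to y$, $x_n\preceq y_n$ $\forall n\Rightarrow x\preceq y$. Solid vector space: positive cone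 $K=\{x:x\succeq0\}$ solid, with $x\prec y$ iff $y-x\in K^\circ$. Cone metric space over $Y$: nonempty $X$ with $d\colon X\times X\to Y$, $d(x,y)\succeq0$, $d(x,y)=0$ iff $x=y$, $d(x,y)=d(y,x)$, $d(x,y)\preceq d(x,z)+d(z,y)$. Convergence in $X$: $x_n\to x$ iff for every $c\succ0$, $d(x_n,x)\prec c$ for all but finitely many $n$ (the topology with basis $U(x,r)=\{y:d(y,x)\prec r\}$, $r\succ 0$). *)

From Stdlib Require Import Reals.
From HB Require Import structures.
From mathcomp Require Import all_boot all_order all_algebra.
From mathcomp Require Import Rstruct.
Set Implicit Arguments. Unset Strict Implicit. Unset Printing Implicit Defensive.
Import GRing.Theory.
Local Open Scope ring_scope.

Section VSC.
Variable Y : lmodType R.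
Variable conv : (nat -> Y) -> Y -> Prop.

Definition vsc_axioms : Prop :=
  (forall (xs ys : nat -> Y) (x y : Y),
      conv xs x -> conv ys y -> conv (fun n => xs n + ys n) (x + y)) /\
  (forall (xs : nat -> Y) (x : Y) (l : R),
      conv xs x -> conv (fun n => l *: xs n) (l *: x)) /\
  (forall (ls : nat -> R) (l : R) (x : Y),
      Un_cv ls l -> conv (fun n => ls n *: x) (l *: x)).

Definition vsc_open (A : Y -> Prop) : Prop :=
  forall (xs : nat -> Y) (x : Y), conv xs x -> A x ->
    exists N : nat, forall n : nat, (N <= n)%N -> A (xs n).

Definition vsc_closed (A : Y -> Prop) : Prop :=
  forall (xs : nat -> Y) (x : Y), conv xs x -> (forall n, A (xs n)) -> A x.

Definition vsc_interior (A : Y -> Prop) : Y -> Prop :=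
  fun x => exists U : Y -> Prop, vsc_open U /\ (forall y, U y -> A y) /\ U x.

Definition is_cone (K : Y -> Prop) : Prop :=
  (exists x, K x) /\ vsc_closed K /\
  (forall (l : R) x, (0 <= l)%R -> K x -> K (l *: x)) /\
  (forall x y, K x -> K y -> K (x + y)) /\
  (forall x, K x -> K (- x) -> x = 0).

Definition is_solid_cone (K : Y -> Prop) : Prop :=
  is_cone K /\ (exists x, K x /\ x <> 0) /\ (exists x, vsc_interior K x).

Variable le : Y -> Y -> Prop.

Definition is_vector_ordering : Prop :=
  (forall x, le x x) /\ (forall x y, le x y -> le y x -> x = y) /\
  (forall x y z, le x y -> le y z -> le x z) /\
  (forall x y z, le x y -> le (x + z) (y + z)) /\
  (forall (l : R) x y, (0 <= l)%R -> le x y -> le (l *: x) (l *: y)) /\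
  (forall (xs ys : nat -> Y) x y, conv xs x -> conv ys y ->
     (forall n, le (xs n) (ys n)) -> le x y).

Definition pos_cone : Y -> Prop := fun x => le 0 x.

Definition is_solid_vector_space : Prop :=
  vsc_axioms /\ is_vector_ordering /\ is_solid_cone pos_cone.

Definition slt (x y : Y) : Prop := vsc_interior pos_cone (y - x).

Section ConeMetric.
Variable X : Type.
Variable d : X -> X -> Y.

Definition is_cone_metric : Prop :=
  (exists x : X, True) /\
  (forall x y, le 0 (d x y)) /\
  (forall x y, d x y = 0 <-> x = y) /\
  (forall x y, d x y = d y x) /\
  (forall x y z, le (d x y) (d x z + d z y)).

Definition cm_conv (xs : nat -> X) (x : X) : Prop :=
  forall c : Y, slt 0 c ->
    exists N : nat, forall n : nat, (N <= n)%N -> slt (d (xs n) x) c.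
End ConeMetric.
End VSC.

From Stdlib Require Import Reals.
From HB Require Import structures.
From mathcomp Require Import all_boot all_order all_algebra.
From mathcomp Require Import Rstruct.
From mathcomp Require Import ring lra.
Import Order.TTheory GRing.Theory Num.Theory.
Local Open Scope ring_scope.

(* Split 0 ≺ c as c/3 + c/3 + c/3. Eventually b_n ≺ c/3, because the open
   set witnessing 0 ≺ c/3 is hit by c/3 - b_n -> c/3; and eventually
   alpha d(y_n, y) <= (alpha + 1) d(y_n, y) ≺ c/3, because
   d(y_n, y) ≺ c/(3 (alpha + 1)); similarly for beta.  Adding the three strict
   inequalities and using the hypothesis gives d(x_n, x) ≺ c. *)

Section SolidVectorSpace.
Context {Y : lmodType R} {conv : (nat -> Y) -> Y -> Prop} {le : Y -> Y -> Prop}.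
Hypothesis conv_axioms : vsc_axioms conv.
Hypothesis le_ordering : is_vector_ordering conv le.

Local Notation interior := (vsc_interior conv (pos_cone le)).
Local Notation "x ≺ y" := (slt conv le x y) (at level 70).

Lemma conv_cst (c : Y) : conv (fun _ => c) c.
Proof.
case: conv_axioms => _ [_ convZl].
rewrite -[c]scale1r; apply: (convZl (fun _ => 1%R)) => eps eps_gt0.
by exists 0%nat => n _; rewrite /R_dist Rminus_diag Rabs_R0.
Qed.

Lemma convD {xs ys : nat -> Y} {x y : Y} :
  conv xs x -> conv ys y -> conv (fun n => xs n + ys n) (x + y).
Proof. by case: conv_axioms => convD _; exact: convD. Qed.

Lemma convZ (l : R) {xs : nat -> Y} {x : Y} :
  conv xs x -> conv (fun n => l *: xs n) (l *: x).
Proof. by case: conv_axioms => _ [convZ _]; exact: convZ. Qed.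

Lemma le_addr (w : Y) {a b : Y} : le a b -> le (a + w) (b + w).
Proof. by case: le_ordering => _ [_ [_ [leD _]]]; exact: leD. Qed.

Lemma le_scaler {l : R} {a b : Y} : 0 <= l -> le a b -> le (l *: a) (l *: b).
Proof. by case: le_ordering => _ [_ [_ [_ [leZ _]]]]; exact: leZ. Qed.

Lemma subr_ge0_le {a b : Y} : le a b -> le 0 (b - a).
Proof. by move/(le_addr (- a)); rewrite subrr. Qed.

Lemma addr_ge0_le {a b : Y} : le 0 a -> le 0 b -> le 0 (a + b).
Proof.
case: le_ordering => _ [_ [le_trans _]] a_ge0 b_ge0.
by apply: le_trans b_ge0 _; move/(le_addr b): a_ge0; rewrite add0r.
Qed.

Lemma interior_ge0 {u : Y} : interior u -> le 0 u.
Proof. by case=> U [_ [UK Uu]]; exact: UK. Qed.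

Lemma interiorDr {u w : Y} : interior u -> le 0 w -> interior (u + w).
Proof.
case=> U [U_open [UK Uu]] w_ge0.
exists (fun v => U (v - w)); split; [|split].
- move=> vs v vs_v Uv; apply: U_open Uv.
  exact: convD vs_v (conv_cst (- w)).
- by move=> v Uv; move: (addr_ge0_le (UK _ Uv) w_ge0); rewrite subrK.
- by rewrite addrK.
Qed.

Lemma interiorZ {l : R} {u : Y} : 0 < l -> interior u -> interior (l *: u).
Proof.
move=> l_gt0 [U [U_open [UK Uu]]].
have l_neq0 : l != 0 by rewrite gt_eqF.
exists (fun v => U (l^-1 *: v)); split; [|split].
- move=> vs v vs_v Uv; apply: U_open Uv.
  exact: convZ vs_v.
- move=> v Uv; move: (le_scaler (ltW l_gt0) (UK _ Uv)).
  by rewrite scaler0 scalerA mulfV // scale1r.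
- by rewrite scalerA mulVf // scale1r.
Qed.

Lemma le_slt_trans {a b c : Y} : le a b -> b ≺ c -> a ≺ c.
Proof.
move=> le_ab /interiorDr /(_ (subr_ge0_le le_ab)).
by rewrite /slt addrA subrK.
Qed.

Lemma sltD {a1 a2 c1 c2 : Y} : a1 ≺ c1 -> a2 ≺ c2 -> a1 + a2 ≺ c1 + c2.
Proof.
move=> lt1 lt2; have := interiorDr lt1 (interior_ge0 lt2).
by rewrite /slt addrACA opprD.
Qed.

Lemma sltZ {l : R} {a c : Y} : 0 < l -> a ≺ c -> l *: a ≺ l *: c.
Proof. by move=> l_gt0 /(interiorZ l_gt0); rewrite /slt scalerBr. Qed.

Lemma slt0_interior (c : Y) : 0 ≺ c <-> interior c.
Proof. by rewrite /slt subr0. Qed.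

Lemma conv0_eventually_slt {bs : nat -> Y} {c : Y} :
  conv bs 0 -> 0 ≺ c -> exists N, forall n, (N <= n)%N -> bs n ≺ c.
Proof.
move=> bs0 /slt0_interior [U [U_open [UK Uc]]].
have c_bs : conv (fun n => c + (-1) *: bs n) c.
  rewrite -[c in conv _ c]addr0 -(scaler0 _ (-1)).
  exact: convD (conv_cst c) (convZ (-1) bs0).
have [N UN] := U_open _ _ c_bs Uc.
exists N => n le_Nn; exists U; split; [|split] => //.
by rewrite -scaleN1r; exact: UN.
Qed.

Section ConeMetric.
Context {X : Type} {d : X -> X -> Y}.
Hypothesis d_ge0 : forall x y, le 0 (d x y).

Lemma cm_conv_eventually_scale_slt {ws : nat -> X} {w : X} {g : R} {c : Y} :
  cm_conv conv le d ws w -> 0 <= g -> 0 ≺ c ->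
  exists N, forall n, (N <= n)%N -> g *: d (ws n) w ≺ c.
Proof.
move=> ws_w g_ge0 c_gt0; have g1_gt0 : 0 < g + 1 by lra.
have [N dN] : exists N, forall n, (N <= n)%N -> d (ws n) w ≺ (g + 1)^-1 *: c.
  apply: ws_w; apply/slt0_interior/interiorZ; last exact/slt0_interior.
  by rewrite invr_gt0.
exists N => n le_Nn.
have le_g_g1 : le (g *: d (ws n) w) ((g + 1) *: d (ws n) w).
  move: (le_addr (g *: d (ws n) w) (d_ge0 (ws n) w)).
  by rewrite add0r scalerDl scale1r addrC.
apply: le_slt_trans le_g_g1 _.
by move: (sltZ g1_gt0 (dN n le_Nn)); rewrite scalerA mulfV ?gt_eqF // scale1r.
Qed.

End ConeMetric.
End SolidVectorSpace.

Theorem theorem9p16 (Y : lmodType R) (conv : (nat -> Y) -> Y -> Prop)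
    (le : Y -> Y -> Prop) (X : Type) (d : X -> X -> Y)
    (xs ys zs : nat -> X) (x y z : X) (bs : nat -> Y) (alpha beta : R) :
  is_solid_vector_space conv le ->
  is_cone_metric le d ->
  conv bs 0 ->
  cm_conv conv le d ys y ->
  cm_conv conv le d zs z ->
  (0 <= alpha)%R -> (0 <= beta)%R ->
  (forall n, le (d (xs n) x) (bs n + alpha *: d (ys n) y + beta *: d (zs n) z)) ->
  cm_conv conv le d xs x.
Proof.
move=> [conv_axioms [le_ordering _]] [_ [d_ge0 _]] bs0 ys_y zs_z
  alpha_ge0 beta_ge0 le_dx c c_gt0.
set c3 := 3%:R^-1 *: c.
have c3_gt0 : slt conv le 0 c3.
  rewrite -(scaler0 _ 3%:R^-1) /c3.
  by apply: (sltZ conv_axioms le_ordering _ c_gt0); rewrite invr_gt0 ltr0n.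
have c_eq : c = c3 + c3 + c3.
  by rewrite /c3 -!scalerDl -[LHS]scale1r; congr (_ *: _); field.
have [N1 HN1] := conv0_eventually_slt conv_axioms bs0 c3_gt0.
have [N2 HN2] :=
  cm_conv_eventually_scale_slt conv_axioms le_ordering d_ge0 ys_y alpha_ge0 c3_gt0.
have [N3 HN3] :=
  cm_conv_eventually_scale_slt conv_axioms le_ordering d_ge0 zs_z beta_ge0 c3_gt0.
exists (maxn N1 (maxn N2 N3)) => n; rewrite !geq_max => /and3P[n1 n2 n3].
have lt_sum := sltD conv_axioms le_ordering
          (sltD conv_axioms le_ordering (HN1 n n1) (HN2 n n2)) (HN3 n n3).
rewrite -c_eq in lt_sum.
exact: (le_slt_trans conv_axioms le_ordering (le_dx n) lt_sum).
Qed.
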